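(* Let $P$ be a program of the imperative language described in the context, and suppose $\vdash P : M$ is derivable in the deterministic calculus, with $M$ an $n\times n$ matrix with coefficients in $\{0,1,2\}^p\to\mathrm{mwp}^{\infty}$. If there exists $\vec a\in\{0,1,2\}^p$ such that no coefficient of $M[\vec a]$ equals $\infty$, then every value computed by $P$ is bounded by a polynomial in the inputs (the initial values of the variables of $P$).
   Context: Language. Variables range over $X_1,\dots,X_n$ (a fixed finite set; these are the program's inputs), and $b$ ranges over boolean expressions (unspecified). Expressions: $e ::= X \mid X - Y \mid X + Y \mid X * Y$. Commands: $C ::= X = e \mid \texttt{if } b \texttt{ then } C \texttt{ else } C \mid \texttt{while } b \texttt{ do } \{C\} \mid \texttt{loop } X \{C\} \mid C;C$, where $\texttt{loop } X\{C\}$ executes $C$ $X$ times. A program is a sequential composition of commands. Semi-rings. $\mathrm{mwp}^\infty$ has carrier $\{0,m,w,p,\infty\}$ with $0<m<w<p<\infty$, addition $\max$, and $\alpha\times\beta=0$ if $\alpha,\beta\neq\infty$ and one of them is $0$, $\max(\alpha,\beta)$ otherwise. $\{0,1,2\}^p\to\mathrm{mwp}^\infty$ is the semi-ring of functions with pointwise operations (constants identified with constant functions). Matrices are $n\times n$ with componentwise $\oplus$, usual product $\otimes$, unit $\mathbf{1}$ ($m$ on the diagonal, $0$ elsewhere), closure $M^*=\mathbf{1}\oplus M\oplus M^2\oplus\cdots$. $M[\vec a]$ is $M$ with every coefficient evaluated at $\vec a$. $\delta(i,k)(\vec a)=m$ if $a_k=i$, $0$ otherwise. $\{^{\alpha}_i\}$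 is the $n$-vector with $\alpha$ in row $i$ and $0$ elsewhere, $\{^\alpha_i,^\beta_j\}=\{^\alpha_i\}\oplus\{^\beta_j\}$, $\mathbf{1}\xleftarrow{j}V$ is the unit matrix with column $j$ replaced by $V$, $\{^\alpha_i\to j\}$ is the matrix with $\alpha$ at $(i,j)$ and $0$ elsewhere. Deterministic calculus $\vdash$: each application of rule E$^A$ receives its own choice index $k\in\{1,\dots,p\}$ ($p$ = number of applications). (E$^A$) for $\star\in\{+,-\}$: $\vdash X_i\star X_j:\delta(0,k)\{^m_i,^p_j\}\oplus\delta(1,k)\{^p_i,^m_j\}\oplus\delta(2,k)\{^w_i,^w_j\}$; (E$^M$) $\vdash X_i*X_j:\{^w_i,^w_j\}$; (E$^S$) $\vdash X_i:\{^m_i\}$; (A) from $\vdash e:V$ infer $\vdash X_j=e:\mathbf{1}\xleftarrow{j}V$; (C) from $\vdash C_1:M_1,\ \vdash C_2:M_2$ infer $\vdash C_1;C_2:M_1\otimes M_2$; (I) same premises, $\vdash\texttt{if } b\texttt{ then } C_1\texttt{ else } C_2:M_1\oplus M_2$; (L$^\infty$) from $\vdash C:M$ infer $\vdash\texttt{loop } X_l\{C\}:M^*\oplus\{^\infty_j\to j\mid M^*_{jj}\neq m\}\oplus\{^p_l\to j\mid\exists i,\ M^*_{ij}=p\}$; (W$^\infty$) from $\vdash C:M$ infer $\vdash\texttt{while } b\texttt{ do }\{C\}:M^*\oplus\{^\infty_j\to j\mid M^*_{jj}\neq m\}\oplus\{^\infty_i\to j\mid M^*_{ij}=p\}$ (conditions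 understood pointwise for each choice assignment). *)

From Stdlib Require Import ClassicalDescription.
From HB Require Import structures.
From mathcomp Require Import all_boot.

Set Implicit Arguments.
Unset Strict Implicit.
Unset Printing Implicit Defensive.

(* The language.  Variables are X_0 .. X_{n-1} (indices 'I_n); values  *)
(* are natural numbers (subtraction is truncated).  Boolean            *)
(* expressions are left unspecified: any boolean test on the store.    *)

Definition store (n : nat) := 'I_n -> nat.

Inductive expr (n : nat) : Type :=
| EVar of 'I_n
| ESub of 'I_n & 'I_n
| EAdd of 'I_n & 'I_n
| EMul of 'I_n & 'I_n.

Inductive cmd (n : nat) : Type :=
| Assign of 'I_n & expr n
| If of (store n -> bool) & cmd n & cmd n
| While of (store n -> bool) & cmd n
| Loop of 'I_n & cmd n
| Seq of cmd n & cmd n.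

Definition eval_expr n (e : expr n) (s : store n) : nat :=
  match e with
  | EVar i => s i
  | ESub i j => s i - s j
  | EAdd i j => s i + s j
  | EMul i j => s i * s j
  end.

Definition upd n (s : store n) (j : 'I_n) (v : nat) : store n :=
  fun i => if i == j then v else s i.

Inductive exec (n : nat) : cmd n -> store n -> store n -> Prop :=
| ExAssign j e s : exec (Assign j e) s (upd s j (eval_expr e s))
| ExIfT (b : store n -> bool) C1 C2 s s' : b s -> exec C1 s s' -> exec (If b C1 C2) s s'
| ExIfF (b : store n -> bool) C1 C2 s s' : ~~ b s -> exec C2 s s' -> exec (If b C1 C2) s s'
| ExWhileF (b : store n -> bool) C s : ~~ b s -> exec (While b C) s s
| ExWhileT (b : store n -> bool) C s s1 s' : b s -> exec C s s1 -> exec (While b C) s1 s' ->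
    exec (While b C) s s'
| ExLoop l C s s' : execn C (s l) s s' -> exec (Loop l C) s s'
| ExSeq C1 C2 s s1 s' : exec C1 s s1 -> exec C2 s1 s' -> exec (Seq C1 C2) s s'
with execn (n : nat) : cmd n -> nat -> store n -> store n -> Prop :=
| ExN0 C s : execn C 0 s s
| ExNS C k s s1 s' : exec C s s1 -> execn C k s1 s' -> execn C k.+1 s s'.

Inductive polyE (n : nat) : Type :=
| PConst of nat
| PVar of 'I_n
| PAdd of polyE n & polyE n
| PMul of polyE n & polyE n.

Fixpoint peval n (q : polyE n) (s : store n) : nat :=
  match q with
  | PConst c => c
  | PVar i => s i
  | PAdd q1 q2 => peval q1 s + peval q2 s
  | PMul q1 q2 => peval q1 s * peval q2 s
  end.

Inductive mwp : Type := M0 | Mm | Mw | Mp | Minf.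

Definition mrank (a : mwp) : nat :=
  match a with M0 => 0 | Mm => 1 | Mw => 2 | Mp => 3 | Minf => 4 end.

Definition mwp_eqb (a b : mwp) : bool := mrank a == mrank b.

Definition madd (a b : mwp) : mwp := if mrank a <= mrank b then b else a.

Definition mmul (a b : mwp) : mwp :=
  if ~~ mwp_eqb a Minf && ~~ mwp_eqb b Minf && (mwp_eqb a M0 || mwp_eqb b M0)
  then M0 else madd a b.

(* Supremum (= infinite sum w.r.t. max) of a sequence in the finite chain mwp. *)
Definition supseq (f : nat -> mwp) : mwp :=
  if excluded_middle_informative (exists k, f k = Minf) then Minf else
  if excluded_middle_informative (exists k, f k = Mp) then Mp else
  if excluded_middle_informative (exists k, f k = Mw) then Mw else
  if excluded_middle_informative (exists k, f k = Mm) then Mm else M0.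

Definition choice (p : nat) := 'I_p -> 'I_3.
Definition coef (p : nat) := choice p -> mwp.
Definition cst p (x : mwp) : coef p := fun _ => x.

Definition vect (n p : nat) := 'I_n -> coef p.
Definition mat (n p : nat) := 'I_n -> 'I_n -> coef p.  (* M i j = entry at row i, column j *)

Definition vadd n p (U V : vect n p) : vect n p := fun i a => madd (U i a) (V i a).
Definition madd_mx n p (A B : mat n p) : mat n p := fun i j a => madd (A i j a) (B i j a).
Definition mmul_mx n p (A B : mat n p) : mat n p :=
  fun i j a => foldr madd M0 [seq mmul (A i k a) (B k j a) | k <- enum 'I_n].
Definition unit_mx n p : mat n p := fun i j _ => if i == j then Mm else M0.
Fixpoint mpow n p (A : mat n p) (k : nat) : mat n p :=
  match k with 0 => @unit_mx n p | k'.+1 => mmul_mx (mpow A k') A end.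
Definition star n p (A : mat n p) : mat n p := fun i j a => supseq (fun k => mpow A k i j a).
Definition mx_at n p (A : mat n p) (a : choice p) : 'I_n -> 'I_n -> mwp := fun i j => A i j a.

Definition delta p (i : nat) (k : 'I_p) : coef p := fun a => if (a k : nat) == i then Mm else M0.
Definition vsingle n p (alpha : coef p) (i : 'I_n) : vect n p :=
  fun r => if r == i then alpha else @cst p M0.
Definition cscale n p (c : coef p) (V : vect n p) : vect n p := fun r a => mmul (c a) (V r a).
Definition replace_col n p (j : 'I_n) (V : vect n p) : mat n p :=
  fun i k => if k == j then V i else @unit_mx n p i k.

Definition inf_diag n p (S : mat n p) : mat n p :=
  fun i j a => if (i == j) && ~~ mwp_eqb (S j j a) Mm then Minf else M0.
Definition p_row n p (l : 'I_n) (S : mat n p) : mat n p :=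
  fun r j a => if (r == l) && [exists i, mwp_eqb (S i j a) Mp] then Mp else M0.
Definition inf_p n p (S : mat n p) : mat n p :=
  fun i j a => if mwp_eqb (S i j a) Mp then Minf else M0.

(* The deterministic calculus.  The seq records the choice indices     *)
(* k : 'I_p given to the applications of rule E^A, in order.           *)

Inductive dexpr (n p : nat) : expr n -> seq 'I_p -> vect n p -> Prop :=
| DE_Sub i j (k : 'I_p) :
    dexpr (ESub i j) [:: k]
      (vadd (vadd (cscale (delta 0 k) (vadd (vsingle (@cst p Mm) i) (vsingle (@cst p Mp) j)))
                  (cscale (delta 1 k) (vadd (vsingle (@cst p Mp) i) (vsingle (@cst p Mm) j))))
            (cscale (delta 2 k) (vadd (vsingle (@cst p Mw) i) (vsingle (@cst p Mw) j))))
| DE_Add i j (k : 'I_p) :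
    dexpr (EAdd i j) [:: k]
      (vadd (vadd (cscale (delta 0 k) (vadd (vsingle (@cst p Mm) i) (vsingle (@cst p Mp) j)))
                  (cscale (delta 1 k) (vadd (vsingle (@cst p Mp) i) (vsingle (@cst p Mm) j))))
            (cscale (delta 2 k) (vadd (vsingle (@cst p Mw) i) (vsingle (@cst p Mw) j))))
| DE_Mul i j : dexpr (EMul i j) [::] (vadd (vsingle (@cst p Mw) i) (vsingle (@cst p Mw) j))
| DE_Var i : dexpr (EVar i) [::] (vsingle (@cst p Mm) i).

Inductive dcmd (n p : nat) : cmd n -> seq 'I_p -> mat n p -> Prop :=
| DC_Assign j e ks V : dexpr e ks V -> dcmd (Assign j e) ks (replace_col j V)
| DC_Seq C1 C2 ks1 ks2 M1 M2 : dcmd C1 ks1 M1 -> dcmd C2 ks2 M2 ->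
    dcmd (Seq C1 C2) (ks1 ++ ks2) (mmul_mx M1 M2)
| DC_If (b : store n -> bool) C1 C2 ks1 ks2 M1 M2 : dcmd C1 ks1 M1 -> dcmd C2 ks2 M2 ->
    dcmd (If b C1 C2) (ks1 ++ ks2) (madd_mx M1 M2)
| DC_Loop l C ks M : dcmd C ks M ->
    dcmd (Loop l C) ks (madd_mx (madd_mx (star M) (inf_diag (star M))) (p_row l (star M)))
| DC_While (b : store n -> bool) C ks M : dcmd C ks M ->
    dcmd (While b C) ks (madd_mx (madd_mx (star M) (inf_diag (star M))) (inf_p (star M))).

(* |- P : M, where each application of E^A receives its own index in
   {1..p} (here 'I_p) and p is the number of such applications. *)
Definition derivable n p (P : cmd n) (M : mat n p) : Prop :=
  exists ks : seq 'I_p, [/\ dcmd P ks M, uniq ks & size ks = p].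

From mathcomp Require Import all_boot zify.
From Stdlib Require Import ClassicalDescription.

Set Implicit Arguments.
Unset Strict Implicit.
Unset Printing Implicit Defensive.

(* Read every coefficient through its rank 0 < m < w < p < oo (0, ..., 4).  A rank
   matrix R without oo certifies that each output X_j is at most
   max(m-inputs, g(w-inputs)) + g(p-inputs) for a monotone polynomial g, the m-, w- and
   p-inputs of X_j being those of rank at least 1, 2 and 3 in column j of R.  Sequences
   and branches compose such bounds through the max-plus product and sum of rank matrices.
   For [loop] and [while] the closure N = M^* has m on its diagonal (otherwise oo
   appears), so whenever X_j depends on X_h with weight w or p in the body, X_j depends
   in N on strictly more variables than X_h.  Hence w-contributions nest at most n times
   whatever the number of iterations, while p-contributions only add up, once per
   iteration.  That number is absorbed into the p-part because [loop X_l] gives X_l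
   weight p in every column having a p-entry, and a [while] loop has no p-entry at all. *)

(** * Polynomially bounded functions *)

Lemma leq_wexp2r m n e : m <= n -> m ^ e <= n ^ e.
Proof. by move=> mn; elim: e => // e IH; rewrite !expnS leq_mul. Qed.

Definition poly_bounded (f : nat -> nat) :=
  [/\ {homo f : x y / x <= y}, f 0 = 0 & exists c d, forall x, f x <= c * x.+1 ^ d].

Lemma poly_bounded_id : poly_bounded id.
Proof. by split=> //; exists 1, 1 => x; rewrite mul1n expn1. Qed.

Lemma poly_bounded_add f g : poly_bounded f -> poly_bounded g ->
  poly_bounded (fun x => f x + g x).
Proof.
move=> [fh f0 [c1 [d1 fb]]] [gh g0 [c2 [d2 gb]]]; split.
- by move=> x y xy; rewrite leq_add ?fh ?gh.
- by rewrite f0 g0.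
- exists (c1 + c2), (d1 + d2) => x; rewrite mulnDl leq_add //.
  + by rewrite (leq_trans (fb x)) // leq_mul2l leq_pexp2l ?leq_addr ?orbT.
  + by rewrite (leq_trans (gb x)) // leq_mul2l leq_pexp2l ?leq_addl ?orbT.
Qed.

Lemma poly_bounded_mul f g : poly_bounded f -> poly_bounded g ->
  poly_bounded (fun x => f x * g x).
Proof.
move=> [fh f0 [c1 [d1 fb]]] [gh g0 [c2 [d2 gb]]]; split.
- by move=> x y xy; rewrite leq_mul ?fh ?gh.
- by rewrite f0.
- exists (c1 * c2), (d1 + d2) => x.
  by rewrite expnD mulnACA leq_mul.
Qed.

Lemma poly_bounded_scale k f : poly_bounded f -> poly_bounded (fun x => k * f x).
Proof.
move=> [fh f0 [c [d fb]]]; split.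
- by move=> x y xy; rewrite leq_mul2l fh ?orbT.
- by rewrite f0 muln0.
- by exists (k * c), d => x; rewrite -mulnA leq_mul2l fb orbT.
Qed.

Lemma poly_bounded_comp f g : poly_bounded f -> poly_bounded g ->
  poly_bounded (f \o g).
Proof.
move=> [fh f0 [c1 [d1 fb]]] [gh g0 [c2 [d2 gb]]]; split.
- by move=> x y xy; apply/fh/gh.
- by rewrite /= g0 f0.
- exists (c1 * c2.+1 ^ d1), (d2 * d1) => x /=.
  rewrite (leq_trans (fb _)) // -mulnA leq_mul2l expnM -expnMn leq_wexp2r ?orbT //.
  by rewrite mulSn addnC -addn1 leq_add ?gb ?expn_gt0.
Qed.

Lemma homo_addn_le g x y : {homo g : u v / u <= v} -> g (x + y) <= g (2 * x) + g (2 * y).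
Proof.
move=> gh; case: (leqP x y) => xy.
- by rewrite (leq_trans (gh _ (2 * y) _)) ?leq_addl //; lia.
- by rewrite (leq_trans (gh _ (2 * x) _)) ?leq_addr //; lia.
Qed.

Lemma homo0_mul_le f c k y z : {homo f : u v / u <= v} -> f 0 = 0 ->
  c * k <= z -> (0 < c -> k <= y) -> k * f (c * k) <= y * f z.
Proof.
move=> fh f0 ckz; case: (posnP c) => [->|_ /(_ isT) ky].
- by rewrite mul0n f0 muln0.
- by rewrite leq_mul ?fh.
Qed.

(** * mwp bounds *)

(* Rank matrices hold the [mrank] of coefficients, so 1, 2, 3 stand for m, w, p.
   [lvl c r s] is the largest input whose rank in column [c] is at least [r]: using
   upward closed classes makes [col_bound] monotone in the ranks. *)
Definition rmat n := 'I_n -> 'I_n -> nat.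

Definition lvl n (c : 'I_n -> nat) (r : nat) (s : store n) : nat := \max_(i | r <= c i) s i.

Definition col_bound n (c : 'I_n -> nat) (g : nat -> nat) (s : store n) : nat :=
  maxn (lvl c 1 s) (g (lvl c 2 s)) + g (lvl c 3 s).

Definition mwp_sound n (C : cmd n) (R : rmat n) : Prop :=
  exists2 g, poly_bounded g &
    forall s s', exec C s s' -> forall j, s' j <= col_bound (R^~ j) g s.

Lemma lvl_ge n (c : 'I_n -> nat) r s i : r <= c i -> s i <= lvl c r s.
Proof. exact: leq_bigmax_cond. Qed.

Lemma lvl_le n (c : 'I_n -> nat) r s m :
  (forall i, r <= c i -> s i <= m) -> lvl c r s <= m.
Proof. by move/bigmax_leqP. Qed.

Lemma le_lvl n (c c' : 'I_n -> nat) r r' s :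
  (forall i, c i <= c' i) -> r' <= r -> lvl c r s <= lvl c' r' s.
Proof.
move=> cc' rr'; apply: lvl_le => i ri; apply: lvl_ge.
by rewrite (leq_trans rr') // (leq_trans ri).
Qed.

Lemma lvl_eq0 n (c : 'I_n -> nat) r s : (forall i, c i < r) -> lvl c r s = 0.
Proof. by move=> cr; apply/eqP; rewrite -leqn0; apply: lvl_le => i; rewrite leqNgt cr. Qed.

Lemma col_bound_homo n (c c' : 'I_n -> nat) g g' s : {homo g' : x y / x <= y} ->
  (forall i, c i <= c' i) -> (forall x, g x <= g' x) -> col_bound c g s <= col_bound c' g' s.
Proof.
move=> g'h cc' gg'.
have le_g x y : x <= y -> g x <= g' y by move=> xy; rewrite (leq_trans (gg' x)) ?g'h.
rewrite /col_bound leq_add ?le_g ?le_lvl //.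
by rewrite geq_max !leq_max le_lvl ?le_g ?le_lvl ?orbT.
Qed.

Fixpoint pexpn n (q : polyE n) (d : nat) : polyE n :=
  if d is d'.+1 then PMul q (pexpn q d') else PConst n 1.

Lemma peval_pexpn n (q : polyE n) d s : peval (pexpn q d) s = peval q s ^ d.
Proof. by elim: d => //= d ->; rewrite expnS. Qed.

Definition sum_vars n : polyE n := foldr (fun i q => PAdd (PVar i) q) (PConst n 0) (enum 'I_n).

Lemma sum_vars_ge n (s : store n) i : s i <= peval (sum_vars n) s.
Proof.
rewrite /sum_vars; have : i \in enum 'I_n by rewrite mem_enum.
by elim: (enum 'I_n) => //= k ks IH; rewrite in_cons => /orP[/eqP <-|/IH]; lia.
Qed.

Lemma mwp_sound_poly n (C : cmd n) (R : rmat n) : mwp_sound C R ->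
  exists q : polyE n, forall s s', exec C s s' -> forall j, s' j <= peval q s.
Proof.
move=> [g [gh _ [c [d gb]]] sB]; set S := sum_vars n.
exists (PAdd S (PMul (PConst n (2 * c)) (pexpn (PAdd S (PConst n 1)) d))) => s s' ex j.
rewrite (leq_trans (sB _ _ ex j)) //= peval_pexpn /= addn1.
have lvlS r : lvl (R^~ j) r s <= peval S s by apply: lvl_le => i _; apply: sum_vars_ge.
have glvlS r : g (lvl (R^~ j) r s) <= c * (peval S s).+1 ^ d.
  by rewrite (leq_trans (gb _)) // leq_mul2l leq_wexp2r ?ltnS ?lvlS ?orbT.
have := lvlS 1; have := glvlS 2; have := glvlS 3; rewrite /col_bound; lia.
Qed.

Definition dominates_prod n (R R1 R2 : rmat n) :=
  forall i h j, 0 < R1 i h -> 0 < R2 h j -> maxn (R1 i h) (R2 h j) <= R i j.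

Lemma dominates_bound n (R R1 R2 : rmat n) (G H : nat -> nat) s r h j :
  dominates_prod R R1 R2 -> {homo G : x y / x <= y} -> {homo H : x y / x <= y} ->
  0 < r <= R2 h j ->
  maxn (lvl (R1^~ h) 1 s) (G (lvl (R1^~ h) 2 s)) + H (lvl (R1^~ h) 3 s) <=
  maxn (lvl (R^~ j) r s) (G (lvl (R^~ j) (maxn r 2) s)) + H (lvl (R^~ j) 3 s).
Proof.
move=> dom Gh Hh /andP[r_gt0 rR2].
have lvl_tr r' : 0 < r' -> lvl (R1^~ h) r' s <= lvl (R^~ j) (maxn r r') s.
  move=> r'_gt0; apply: lvl_le => i r'R1; apply: lvl_ge.
  have := dom i h j; lia.
have lvl3 : lvl (R1^~ h) 3 s <= lvl (R^~ j) 3 s.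
  by rewrite (leq_trans (lvl_tr 3 isT)) // le_lvl ?leq_maxr.
have lvl1 := lvl_tr 1 isT; have Glvl2 := Gh _ _ (lvl_tr 2 isT).
rewrite (maxn_idPl r_gt0) in lvl1.
rewrite leq_add ?Hh //; lia.
Qed.

Lemma mwp_sound_assign n j (e : expr n) (R : rmat n) g : poly_bounded g ->
  (forall k, k != j -> 0 < R k k) ->
  (forall s, eval_expr e s <= col_bound (R^~ j) g s) -> mwp_sound (Assign j e) R.
Proof.
move=> gP Rkk eB; exists g => // s s' ex k; inversion ex; subst.
rewrite /upd; case: eqP => [->|/eqP kj]; first exact: eB.
by rewrite /col_bound (leq_trans _ (leq_addr _ _)) // (leq_trans _ (leq_maxl _ _)) // lvl_ge ?Rkk.
Qed.

Lemma mwp_sound_seq n (C1 C2 : cmd n) (R R1 R2 : rmat n) :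
  mwp_sound C1 R1 -> mwp_sound C2 R2 -> dominates_prod R R1 R2 -> mwp_sound (Seq C1 C2) R.
Proof.
move=> [g1 g1P s1B] [g2 g2P s2B] dom.
exists (fun x => g1 x + 2 * g2 (2 * (x + g1 x))).
  apply: (poly_bounded_add g1P); apply: poly_bounded_scale.
  apply: (poly_bounded_comp g2P); apply: poly_bounded_scale.
  exact: poly_bounded_add poly_bounded_id _.
move=> s s' ex j; inversion ex as [| | | | | |? ? ? s1 ? ex1 ex2]; subst.
have [g1h _ _] := g1P; have [g2h _ _] := g2P.
set A := lvl (R^~ j) 1 s; set B := lvl (R^~ j) 2 s; set P := lvl (R^~ j) 3 s.
have lvl2 r : 0 < r -> lvl (R2^~ j) r s1 <=
    maxn (lvl (R^~ j) r s) (g1 (lvl (R^~ j) (maxn r 2) s)) + g1 P.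
  move=> r_gt0; apply: lvl_le => h rR2; apply: leq_trans (s1B _ _ ex1 h) _.
  by apply: (dominates_bound s dom g1h g1h); rewrite r_gt0.
have lvl21 : lvl (R2^~ j) 1 s1 <= maxn A (g1 B) + g1 P := lvl2 1 isT.
have lvl22 : lvl (R2^~ j) 2 s1 <= maxn B (g1 B) + g1 P := lvl2 2 isT.
have lvl23 : lvl (R2^~ j) 3 s1 <= maxn P (g1 P) + g1 P := lvl2 3 isT.
have g2w : g2 (lvl (R2^~ j) 2 s1) <= g2 (2 * (B + g1 B)) + g2 (2 * (P + g1 P)).
  rewrite (leq_trans (g2h _ _ lvl22)) // (leq_trans (homo_addn_le _ _ g2h)) //.
  by rewrite leq_add ?g2h //; lia.
have g2p : g2 (lvl (R2^~ j) 3 s1) <= g2 (2 * (P + g1 P)).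
  by rewrite (leq_trans (g2h _ _ lvl23)) // g2h //; lia.
apply: leq_trans (s2B _ _ ex2 j) _; rewrite /col_bound -/A -/B -/P; lia.
Qed.

Lemma mwp_sound_if n b (C1 C2 : cmd n) (R R1 R2 : rmat n) :
  mwp_sound C1 R1 -> mwp_sound C2 R2 ->
  (forall i j, R1 i j <= R i j) -> (forall i j, R2 i j <= R i j) -> mwp_sound (If b C1 C2) R.
Proof.
move=> [g1 g1P s1B] [g2 g2P s2B] R1R R2R.
have [gh _ _] := poly_bounded_add g1P g2P.
exists (fun x => g1 x + g2 x) => [|s s' ex j]; first exact: poly_bounded_add.
inversion ex as [|? ? ? ? ? _b ex1|? ? ? ? ? _b ex1| | | |]; subst.
- by rewrite (leq_trans (s1B _ _ ex1 j)) // col_bound_homo // => x; rewrite leq_addr.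
- by rewrite (leq_trans (s2B _ _ ex1 j)) // col_bound_homo // => x; rewrite leq_addl.
Qed.

(** * Iteration *)

(* Growth after any number of iterations of an output depending on [l] variables in the
   closure: [loop_wpoly] for its w-part and [loop_ppoly] for the p-part that each
   iteration may add. *)
Fixpoint loop_wpoly (g : nat -> nat) (l x : nat) : nat :=
  if l is l'.+1 then loop_wpoly g l' x + g (2 * loop_wpoly g l' x) else x.

Fixpoint loop_ppoly (g : nat -> nat) (l y : nat) : nat :=
  if l is l'.+1 then
    loop_ppoly g l' y + 2 * g (2 * (loop_wpoly g l' y + y * loop_ppoly g l' y))
  else 0.

Section LoopPolynomials.
Variable g : nat -> nat.
Hypothesis gP : poly_bounded g.

Lemma poly_bounded_loop_wpoly l : poly_bounded (loop_wpoly g l).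
Proof.
elim: l => [|l IH] /=; first exact: poly_bounded_id.
apply: (poly_bounded_add IH); apply: (poly_bounded_comp gP).
exact: poly_bounded_scale.
Qed.

Lemma poly_bounded_loop_ppoly l : poly_bounded (loop_ppoly g l).
Proof.
elim: l => [|l IH] /=; first by split=> //; exists 0, 0.
apply: (poly_bounded_add IH); apply: poly_bounded_scale; apply: (poly_bounded_comp gP).
apply: poly_bounded_scale; apply: (poly_bounded_add (poly_bounded_loop_wpoly l)).
exact: poly_bounded_mul poly_bounded_id IH.
Qed.

Lemma leq_loop_wpoly l x : x <= loop_wpoly g l x.
Proof. by elim: l => //= l IH; rewrite (leq_trans IH) ?leq_addr. Qed.

Lemma loop_wpoly_homo l l' x y : l <= l' -> x <= y -> loop_wpoly g l x <= loop_wpoly g l' y.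
Proof.
move=> ll' xy; have [wh _ _] := poly_bounded_loop_wpoly l.
rewrite (leq_trans (wh _ _ xy)) //.
by apply: (homo_leq leqnn leq_trans (f := loop_wpoly g ^~ y)) => // k; rewrite leq_addr.
Qed.

Lemma loop_ppoly_homo l l' x y : l <= l' -> x <= y -> loop_ppoly g l x <= loop_ppoly g l' y.
Proof.
move=> ll' xy; have [ph _ _] := poly_bounded_loop_ppoly l.
rewrite (leq_trans (ph _ _ xy)) //.
by apply: (homo_leq leqnn leq_trans (f := loop_ppoly g ^~ y)) => // k; rewrite /= leq_addr.
Qed.

Lemma mul_loop_ppoly_le l c k :
  k * loop_ppoly g l (c * k) <= c * k.+1 * loop_ppoly g l (c * k.+1).
Proof.
have [ph p0 _] := poly_bounded_loop_ppoly l.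
apply: homo0_mul_le => //; rewrite ?leq_mul2l ?leqnSn ?orbT // => c_gt0.
exact: leq_trans (leqnSn k) (leq_pmull _ c_gt0).
Qed.

End LoopPolynomials.

Lemma execn_last n (C : cmd n) k s t : execn C k.+1 s t ->
  exists2 t0, execn C k s t0 & exec C t0 t.
Proof.
elim: k s => [|k IH] s; inversion 1 as [|? ? ? s1 ? ex1 exk]; subst.
- by inversion exk; subst; exists s => //; constructor.
- by have [t0 ex0 ext] := IH _ exk; exists t0 => //; apply: ExNS ex1 ex0.
Qed.

Section Iteration.
Variables (n : nat) (C : cmd n) (E N : rmat n) (g : nat -> nat).
Hypothesis gP : poly_bounded g.
Hypothesis body_bound : forall t t', exec C t t' -> forall j, t' j <= col_bound (E^~ j) g t.
Hypothesis N_diag : forall j, N j j = 1.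
Hypothesis N_closed : dominates_prod N N E.

Definition ndeps j := #|[pred i | 0 < N i j]|.

Lemma ndeps_gt0 j : 0 < ndeps j.
Proof. by apply/card_gt0P; exists j; rewrite inE N_diag. Qed.

Lemma ndeps_le_n j : ndeps j <= n.
Proof. by rewrite -[n]card_ord max_card. Qed.

Lemma ndeps_le h j : 0 < E h j -> ndeps h <= ndeps j.
Proof.
move=> hE; apply/subset_leq_card/subsetP => i; rewrite !inE => Nih.
by have := N_closed Nih hE; lia.
Qed.

Lemma ndeps_lt h j : 2 <= E h j -> ndeps h < ndeps j.
Proof.
move=> hE; have hE0 : 0 < E h j by lia.
apply/proper_card/properP; split.
  apply/subsetP => i; rewrite !inE => Nih; by have := N_closed Nih hE0; lia.
exists j; rewrite !inE ?N_diag //; apply/negP => Njh.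
by have := N_closed Njh hE0; rewrite N_diag; lia.
Qed.

(* The argument [lvl (N^~ j) 3 s * k] vanishes when X_j has no p-input and otherwise
   dominates the number [k] of iterations. *)
Definition iter_inv k (s t : store n) := forall j,
  t j <= maxn (lvl (N^~ j) 1 s) (loop_wpoly g (ndeps j) (lvl (N^~ j) 2 s))
         + k * loop_ppoly g (ndeps j) (lvl (N^~ j) 3 s * k).

Lemma iter_inv0 s : iter_inv 0 s s.
Proof. by move=> j; rewrite mul0n addn0 (leq_trans _ (leq_maxl _ _)) // lvl_ge ?N_diag. Qed.

Lemma iter_inv_transfer k s t r h j : iter_inv k s t -> 0 < r <= E h j ->
  t h <= maxn (lvl (N^~ j) r s) (loop_wpoly g (ndeps h) (lvl (N^~ j) (maxn r 2) s))
         + k * loop_ppoly g (ndeps h) (lvl (N^~ j) 3 s * k).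
Proof.
move=> inv rE; apply: leq_trans (inv h) _.
apply: (dominates_bound s N_closed (G := loop_wpoly g (ndeps h))
                                   (H := fun x => k * loop_ppoly g (ndeps h) (x * k))) => //.
- by move=> u v uv; apply: loop_wpoly_homo.
- by move=> u v uv; rewrite leq_mul2l loop_ppoly_homo ?leq_mul2r ?uv ?orbT.
Qed.

Lemma iter_inv_step k s t t' : iter_inv k s t -> exec C t t' -> iter_inv k.+1 s t'.
Proof.
move=> inv ex j; have [gh _ _] := gP.
have [l' ndeps_j] : exists l', ndeps j = l'.+1 by exists (ndeps j).-1; rewrite prednK ?ndeps_gt0.
set F := loop_wpoly g; set P := loop_ppoly g.
set a := lvl (N^~ j) 1 s; set b := lvl (N^~ j) 2 s; set c := lvl (N^~ j) 3 s.
set y := c * k.+1; set z := F l' y + y * P l' y.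
have kP l l'' : l <= l'' -> k * P l (c * k) <= y * P l'' y.
  move=> ll''; rewrite (leq_trans _ (mul_loop_ppoly_le gP l'' c k)) // leq_mul2l.
  by rewrite loop_ppoly_homo ?orbT.
have t_m h : 0 < E h j -> t h <= maxn a (F (ndeps j) b) + k * P (ndeps j) y.
  move=> hE; have := iter_inv_transfer (r := 1) inv hE.
  have := loop_wpoly_homo gP (ndeps_le hE) (leqnn b).
  have : k * P (ndeps h) (c * k) <= k * P (ndeps j) y.
    by rewrite leq_mul2l loop_ppoly_homo ?ndeps_le ?leq_mul2l ?leqnSn ?orbT.
  rewrite /= -/a -/b -/c -/F -/P; lia.
have t_w h : 2 <= E h j -> t h <= F l' b + y * P l' y.
  move=> hE; have ndeps_h : ndeps h <= l' by have := ndeps_lt hE; lia.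
  have := iter_inv_transfer (r := 2) inv hE; have := kP _ _ ndeps_h.
  have := loop_wpoly_homo gP ndeps_h (leqnn b); have := leq_loop_wpoly g l' b.
  rewrite /= -/b -/c -/F -/P; lia.
have t_p h : 3 <= E h j -> t h <= z.
  move=> hE; have ndeps_h : ndeps h <= l' by have := ndeps_lt (leq_trans _ hE); lia.
  have := iter_inv_transfer (r := 3) inv hE; have := kP _ _ ndeps_h.
  have c_y : c <= y := leq_pmulr c (ltn0Sn k).
  have := loop_wpoly_homo gP ndeps_h c_y; have := leq_loop_wpoly g l' y.
  rewrite /= /z -/c -/y -/F -/P; lia.
have l2 : g (lvl (E^~ j) 2 t) <= g (2 * F l' b) + g (2 * z).
  rewrite (leq_trans (gh _ _ (lvl_le t_w))) // (leq_trans (homo_addn_le _ _ gh)) //.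
  by rewrite leq_add ?gh //; lia.
have l3 : g (lvl (E^~ j) 3 t) <= g (2 * z) by rewrite gh // (leq_trans (lvl_le t_p)) //; lia.
have eF : F (ndeps j) b = F l' b + g (2 * F l' b) by rewrite ndeps_j.
have eP : P (ndeps j) y = P l' y + 2 * g (2 * z) by rewrite ndeps_j.
apply: leq_trans (body_bound ex j) _; have := lvl_le t_m; rewrite /col_bound mulSn; lia.
Qed.

Lemma execn_bound k s t j : execn C k s t ->
  t j <= maxn (lvl (N^~ j) 1 s) (loop_wpoly g n (lvl (N^~ j) 2 s))
         + k * loop_ppoly g n (lvl (N^~ j) 3 s * k).
Proof.
have inv : execn C k s t -> iter_inv k s t.
  elim: k t => [|k IH] t ex; first by inversion ex; subst; apply: iter_inv0.
  by have [t0 ex0 ext] := execn_last ex; apply: iter_inv_step (IH _ ex0) ext.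
move/inv/(_ j)/leq_trans; apply; rewrite leq_add ?leq_mul2l //.
- by rewrite geq_max leq_maxl leq_max loop_wpoly_homo ?ndeps_le_n ?orbT.
- by rewrite loop_ppoly_homo ?ndeps_le_n ?orbT.
Qed.

End Iteration.

Lemma mwp_sound_loop n l (C : cmd n) (E N R : rmat n) :
  mwp_sound C E -> (forall j, N j j = 1) -> dominates_prod N N E ->
  (forall i j, N i j <= R i j) -> (forall i j, 3 <= N i j -> 3 <= R l j) ->
  mwp_sound (Loop l C) R.
Proof.
move=> [g gP bodyB] Ndiag Ndom NR Np.
have wP := poly_bounded_loop_wpoly gP n; have pP := poly_bounded_loop_ppoly gP n.
have [wh _ _] := wP; have [ph p0 _] := pP.
exists (fun x => loop_wpoly g n x + x * loop_ppoly g n (x * x)).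
  apply: (poly_bounded_add wP); apply: (poly_bounded_mul poly_bounded_id).
  exact: poly_bounded_comp pP (poly_bounded_mul poly_bounded_id poly_bounded_id).
move=> s s' ex j; inversion ex as [| | | | |? ? ? ? exn|]; subst.
apply: leq_trans (execn_bound gP bodyB Ndiag Ndom j exn) _.
set p' := lvl (R^~ j) 3 s.
have loopP : s l * loop_ppoly g n (lvl (N^~ j) 3 s * s l) <= p' * loop_ppoly g n (p' * p').
  case: (pickP (fun i => 3 <= N i j)) => [i Nij | none].
    have sl : s l <= p' by apply/lvl_ge/Np/Nij.
    by rewrite leq_mul ?ph ?leq_mul ?(le_lvl s (NR^~ j)).
  by rewrite (lvl_eq0 (r := 3)) ?mul0n ?p0 ?muln0 // => i; rewrite ltnNge none.
have := wh _ _ (le_lvl s (NR^~ j) (leqnn 2)); have := le_lvl s (NR^~ j) (leqnn 1).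
rewrite /col_bound -/p'; lia.
Qed.

Lemma exec_while n b (C : cmd n) s s' : exec (While b C) s s' -> exists k, execn C k s s'.
Proof.
move=> ex; remember (While b C) as w eqn:ew.
induction ex as [| | |? ? ? _|? ? ? t ? _ ex1 _ ex2 IH| |]; try discriminate.
- by exists 0; constructor.
- by case: ew => ? ?; subst; have [k exk] := IH erefl; exists k.+1; apply: ExNS ex1 exk.
Qed.

Lemma mwp_sound_while n b (C : cmd n) (E N R : rmat n) :
  mwp_sound C E -> (forall j, N j j = 1) -> dominates_prod N N E ->
  (forall i j, N i j <= R i j) -> (forall i j, N i j < 3) -> mwp_sound (While b C) R.
Proof.
move=> [g gP bodyB] Ndiag Ndom NR Nw.
have wP := poly_bounded_loop_wpoly gP n; have [wh _ _] := wP.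
have [_ p0 _] := poly_bounded_loop_ppoly gP n.
exists (loop_wpoly g n) => // s s' /exec_while [k exk] j.
apply: leq_trans (execn_bound gP bodyB Ndiag Ndom j exk) _.
rewrite (lvl_eq0 (r := 3)) // mul0n p0 muln0 addn0 /col_bound.
have := wh _ _ (le_lvl s (NR^~ j) (leqnn 2)); have := le_lvl s (NR^~ j) (leqnn 1); lia.
Qed.

(** * Soundness of the calculus *)

Lemma mrank_madd x y : mrank (madd x y) = maxn (mrank x) (mrank y).
Proof. by case: x; case: y. Qed.

Lemma mrank_mmul x y : 0 < mrank x -> 0 < mrank y ->
  mrank (mmul x y) = maxn (mrank x) (mrank y).
Proof. by case: x; case: y. Qed.

Lemma mmulInfx y : mmul Minf y = Minf. Proof. by case: y. Qed.
Lemma mmulxInf x : mmul x Minf = Minf. Proof. by case: x. Qed.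

Lemma supseq_ge f k : mrank (f k) <= mrank (supseq f).
Proof.
rewrite /supseq; case fk: (f k) => //;
  repeat (case: excluded_middle_informative => /= [//|nP]; (try by case: nP; exists k); clear nP).
Qed.

Lemma supseq_attained f : exists k, supseq f = f k.
Proof.
rewrite /supseq; repeat (case: excluded_middle_informative => /= [[k <-]|?]; first by exists k).
exists 0; case f0: (f 0) => //; match goal with H : ~ _ |- _ => by case: H; exists 0 end.
Qed.

Definition rk n p (A : mat n p) (a : choice p) : rmat n := fun i j => mrank (A i j a).

Lemma rk_madd_mx n p (A B : mat n p) a i j :
  rk (madd_mx A B) a i j = maxn (rk A a i j) (rk B a i j).
Proof. exact: mrank_madd. Qed.

Lemma mrank_mmul_mx_ge n p (A B : mat n p) a i h j :
  mrank (mmul (A i h a) (B h j a)) <= rk (mmul_mx A B) a i j.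
Proof.
rewrite /rk /mmul_mx; have : h \in enum 'I_n by rewrite mem_enum.
elim: (enum 'I_n) => //= k ks IH; rewrite in_cons mrank_madd leq_max.
by case/orP=> [/eqP <-|/IH ->]; rewrite ?leqnn ?orbT.
Qed.

Lemma dominates_mmul_mx n p (A B : mat n p) a :
  dominates_prod (rk (mmul_mx A B) a) (rk A a) (rk B a).
Proof. by move=> i h j Aih Bhj; rewrite -mrank_mmul // mrank_mmul_mx_ge. Qed.
Arguments dominates_mmul_mx {n p} A B a.

Lemma mmul_mx_finite n p (A B : mat n p) a : (forall i j, rk (mmul_mx A B) a i j <= 3) ->
  (forall i j, rk A a i j <= 3) /\ (forall i j, rk B a i j <= 3).
Proof.
move=> fin; split=> i j; rewrite /rk.
- case Aij: (A i j a) => //.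
  by have := leq_trans (mrank_mmul_mx_ge A B a i j j) (fin i j); rewrite Aij mmulInfx.
- case Bij: (B i j a) => //.
  by have := leq_trans (mrank_mmul_mx_ge A B a i i j) (fin i j); rewrite Bij mmulxInf.
Qed.

Lemma dominates_star n p (M : mat n p) a :
  dominates_prod (rk (star M) a) (rk (star M) a) (rk M a).
Proof.
move=> i h j; rewrite /rk /star; have [k ->] := supseq_attained (fun k => mpow M k i h a).
move=> Sih Mhj; rewrite -mrank_mmul // (leq_trans _ (supseq_ge _ k.+1)) //.
exact: (mrank_mmul_mx_ge (mpow M k) M).
Qed.
Arguments dominates_star {n p} M a.

Lemma dominates_diag_le n (N E : rmat n) : dominates_prod N N E -> (forall j, N j j = 1) ->
  forall i j, E i j <= N i j.
Proof.
move=> dom diag i j; case: (posnP (E i j)) => [->//|Eij].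
by have := dom i i j; rewrite diag => /(_ isT Eij); rewrite geq_max => /andP[].
Qed.

(* With [S = star M], the matrices of rules L^oo and W^oo have this shape. *)
Definition closure_rule_mx n p (S X : mat n p) : mat n p :=
  madd_mx (madd_mx S (inf_diag S)) X.

Lemma rk_le_closure_rule n p (S X : mat n p) a i j :
  rk S a i j <= rk (closure_rule_mx S X) a i j.
Proof. by rewrite !rk_madd_mx -maxnA leq_maxl. Qed.

Lemma no_inf_diag_m n p (S X : mat n p) a :
  (forall i j, rk (closure_rule_mx S X) a i j <= 3) -> forall j, rk S a j j = 1.
Proof.
move=> fin j; have := fin j j; rewrite !rk_madd_mx /rk /inf_diag eqxx /mwp_eqb /=.
by case: eqP => //= _; rewrite !geq_max andbF.
Qed.

Lemma no_inf_p_row n p l (S : mat n p) a :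
  (forall i j, rk (closure_rule_mx S (p_row l S)) a i j <= 3) ->
  forall i j, 3 <= rk S a i j -> 3 <= rk (closure_rule_mx S (p_row l S)) a l j.
Proof.
move=> fin i j Sij.
have Sij3 : mrank (S i j a) = 3.
  by have := fin i j; have := rk_le_closure_rule S (p_row l S) a i j; rewrite /rk in Sij *; lia.
have Sp : [exists i, mwp_eqb (S i j a) Mp] by apply/existsP; exists i; rewrite /mwp_eqb Sij3.
by rewrite rk_madd_mx /rk /p_row eqxx Sp leq_maxr.
Qed.

Lemma no_inf_inf_p n p (S : mat n p) a :
  (forall i j, rk (closure_rule_mx S (inf_p S)) a i j <= 3) -> forall i j, rk S a i j < 3.
Proof.
move=> fin i j; have := fin i j; rewrite !rk_madd_mx /rk /inf_p /mwp_eqb.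
by case: (S i j a) => //=; lia.
Qed.

Lemma no_inf_star_body n p (M X : mat n p) a :
  (forall i j, rk (closure_rule_mx (star M) X) a i j <= 3) -> forall i j, rk M a i j <= 3.
Proof.
move=> fin i j; rewrite (leq_trans _ (fin i j)) //.
rewrite (leq_trans _ (rk_le_closure_rule (star M) X a i j)) //.
exact: dominates_diag_le (dominates_star M a) (no_inf_diag_m fin) i j.
Qed.

Definition expr_poly (x : nat) := x * x + 2 * x.

Lemma poly_bounded_expr_poly : poly_bounded expr_poly.
Proof.
apply: poly_bounded_add; first exact: poly_bounded_mul poly_bounded_id poly_bounded_id.
exact: poly_bounded_scale poly_bounded_id.
Qed.

Definition addsub_vect n p (i i' : 'I_n) (k : 'I_p) : vect n p :=
  vadd (vadd (cscale (delta 0 k) (vadd (vsingle (@cst p Mm) i) (vsingle (@cst p Mp) i')))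
             (cscale (delta 1 k) (vadd (vsingle (@cst p Mp) i) (vsingle (@cst p Mm) i'))))
       (cscale (delta 2 k) (vadd (vsingle (@cst p Mw) i) (vsingle (@cst p Mw) i'))).

Lemma addsub_vect_levels n p (i i' : 'I_n) (k : 'I_p) a
    (c := fun r => mrank (addsub_vect i i' k r a)) :
  [\/ 1 <= c i /\ 3 <= c i', 3 <= c i /\ 1 <= c i' | 2 <= c i /\ 2 <= c i'].
Proof.
rewrite /c /addsub_vect /vadd /cscale /delta /vsingle /cst !eqxx.
by case: (a k) => -[|[|[|//]]] _ /=; [apply: Or31 | apply: Or32 | apply: Or33];
  case: (i == i'); case: (i' == i).
Qed.

Lemma addsub_bound n (c : 'I_n -> nat) i i' s :
  [\/ 1 <= c i /\ 3 <= c i', 3 <= c i /\ 1 <= c i' | 2 <= c i /\ 2 <= c i'] ->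
  s i + s i' <= col_bound c expr_poly s.
Proof.
by rewrite /col_bound /expr_poly => -[] [/(lvl_ge s) ci /(lvl_ge s) ci']; lia.
Qed.

Lemma dexpr_bound n p e ks (V : vect n p) a s :
  dexpr e ks V -> eval_expr e s <= col_bound (fun r => mrank (V r a)) expr_poly s.
Proof.
case=> [i i' k|i i' k|i i'|i] /=.
- apply: leq_trans (leq_subr (s i') (s i)) (leq_trans (leq_addr (s i') (s i)) _).
  exact: addsub_bound (addsub_vect_levels i i' k a).
- exact: addsub_bound (addsub_vect_levels i i' k a).
- set c := fun r => _.
  have ci r : r = i \/ r = i' -> 2 <= c r.
    by rewrite /c /vadd /vsingle /cst; case=> ->; rewrite eqxx; [case: (i == i')|case: (i' == i)].
  have := leq_mul (lvl_ge s (ci i (or_introl erefl))) (lvl_ge s (ci i' (or_intror erefl))).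
  rewrite /col_bound /expr_poly; lia.
- rewrite /col_bound (leq_trans _ (leq_addr _ _)) // (leq_trans _ (leq_maxl _ _)) //.
  by apply: lvl_ge; rewrite /vsingle /cst eqxx.
Qed.

Lemma dcmd_mwp_sound n p (C : cmd n) ks (M : mat n p) a :
  dcmd C ks M -> (forall i j, rk M a i j <= 3) -> mwp_sound C (rk M a).
Proof.
elim=> {C ks M} [j e ks V eV _ | C1 C2 ks1 ks2 M1 M2 _ IH1 _ IH2 fin
  | b C1 C2 ks1 ks2 M1 M2 _ IH1 _ IH2 fin | l C ks M _ IH fin | b C ks M _ IH fin].
- apply: (mwp_sound_assign poly_bounded_expr_poly) => [k kj | s].
    by rewrite /rk /replace_col (negbTE kj) /unit_mx eqxx.
  have [eh _ _] := poly_bounded_expr_poly.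
  rewrite (leq_trans (dexpr_bound a s eV)) // col_bound_homo // => r.
  by rewrite /rk /replace_col eqxx.
- have [fin1 fin2] := mmul_mx_finite fin.
  exact: mwp_sound_seq (IH1 fin1) (IH2 fin2) (dominates_mmul_mx M1 M2 a).
- have le1 i j : rk M1 a i j <= rk (madd_mx M1 M2) a i j by rewrite rk_madd_mx leq_maxl.
  have le2 i j : rk M2 a i j <= rk (madd_mx M1 M2) a i j by rewrite rk_madd_mx leq_maxr.
  have fin1 i j : rk M1 a i j <= 3 := leq_trans (le1 i j) (fin i j).
  have fin2 i j : rk M2 a i j <= 3 := leq_trans (le2 i j) (fin i j).
  exact: mwp_sound_if (IH1 fin1) (IH2 fin2) le1 le2.
- apply: mwp_sound_loop (IH (no_inf_star_body fin)) (no_inf_diag_m fin) (dominates_star M a) _ _.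
    exact: rk_le_closure_rule.
  exact: no_inf_p_row fin.
- apply: mwp_sound_while (IH (no_inf_star_body fin)) (no_inf_diag_m fin) (dominates_star M a) _ _.
    exact: rk_le_closure_rule.
  exact: no_inf_inf_p fin.
Qed.

Theorem corollary11 (n p : nat) (P : cmd n) (M : mat n p) :
  derivable P M ->
  (exists a : choice p, forall i j : 'I_n, mx_at M a i j <> Minf) ->
  exists q : polyE n, forall (s s' : store n), exec P s s' ->
    forall j : 'I_n, s' j <= peval q s.
Proof.
move=> [ks [dM _ _]] [a M_finite].
have M_fin i j : rk M a i j <= 3 by move: (M_finite i j); rewrite /rk /mx_at; case: (M i j a).
exact: mwp_sound_poly (dcmd_mwp_sound dM M_fin).
Qed.
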